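(* Let $P$ be a finite poset and $K:P\to\mathcal{S}$ a diagram of finite simplicial complexes and simplicial maps. If $p\in P$ is such that $\hat F_p=\{r\in P: r>p\}$ is homotopically trivial (in particular if $p$ is an up beat point or an up weak point of $P$), then $\operatorname{hocolim} K\simeq\operatorname{hocolim} K|_{P\smallsetminus\{p\}}$.
   Context: $P$ is viewed as a category with a unique arrow $p\to q$ iff $p\le q$; $\mathcal{S}$ is the category of topological spaces and $\operatorname{hocolim}$ is the usual homotopy colimit in $\mathcal{S}$; $K|_{P\smallsetminus\{p\}}$ is the restricted diagram and $\simeq$ denotes homotopy equivalence. A finite poset is homotopically trivial if its order complex (simplicial complex of nonempty chains) is contractible. $p$ is an up beat point if $\hat F_p$ has a minimum; a finite poset is contractible if it can be reduced to one point by successively removing points $x$ such that $\{y>x\}$ has a minimum or $\{y<x\}$ has a maximum; $p$ is an up weak point if $\hat F_p$ is contractible in this sense. *)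

From HB Require Import structures.
From mathcomp Require Import all_boot all_order all_algebra.
From mathcomp Require Import all_classical all_reals.
From mathcomp Require Import topology function_spaces num_topology.
Import numFieldTopology.Exports.
Set Implicit Arguments. Unset Strict Implicit. Unset Printing Implicit Defensive.
Import Order.TTheory GRing.Theory Num.Theory.
Local Open Scope classical_set_scope.
Local Open Scope ring_scope.

Definition unit_interval (R : realType) : set R := [set s | 0 <= s <= 1].
Arguments unit_interval : clear implicits.

Definition homotopic_in (R : realType) (T U : topologicalType)
    (A : set T) (B : set U) (f g : T -> U) : Prop :=
  exists H : (R * T)%type -> U,
    {within unit_interval R `*` A, continuous H} /\
    (forall s x, unit_interval R s -> A x -> B (H (s, x))) /\
    (forall x, A x -> H (0, x) = f x /\ H (1, x) = g x).

Definition homotopy_equiv (R : realType) (T U : topologicalType)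
    (A : set T) (B : set U) : Prop :=
  exists (f : T -> U) (g : U -> T),
    [/\ {within A, continuous f} /\ (forall x, A x -> B (f x)),
        {within B, continuous g} /\ (forall y, B y -> A (g y)),
        homotopic_in R A A (g \o f) id & homotopic_in R B B (f \o g) id].

Definition contractible (R : realType) (T : topologicalType) (A : set T) : Prop :=
  exists x0, A x0 /\ homotopy_equiv R A [set x0].

Record fsc := FSC {
  vtx : finType;
  face : {set {set vtx}};
  face_nonempty : (finset.set0 : {set vtx}) \notin face;
  face_down : forall s t : {set vtx}, s \in face -> t \subset s -> t != (finset.set0 : {set vtx}) -> t \in face
}.

Definition realization (R : realType) (C : fsc) : set {ptws vtx C -> R} :=
  [set x | [/\ forall v, 0 <= x v, \sum_v x v = 1 & [set v | x v != 0]%SET \in face C]].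
Arguments realization R C : clear implicits.

(** Pushforward of barycentric coordinates along a vertex map
    (= the affine extension of a simplicial map). *)
Definition push (R : realType) (V W : finType) (g : V -> W) (x : V -> R) : W -> R :=
  fun w => \sum_(v | g v == w) x v.

Unset Implicit Arguments.
Record diagram (d : Order.disp_t) (P : finPOrderType d) := Diagram {
  dK : P -> fsc;
  dmap : forall p q : P, vtx (dK p) -> vtx (dK q);
  dmap_simplicial : forall (p q : P) (s : {set vtx (dK p)}),
    (p <= q)%O -> s \in face (dK p) -> [set dmap p q v | v in s]%SET \in face (dK q);
  dmap_id : forall (p : P) v, dmap p p v = v;
  dmap_comp : forall (p q r : P) v, (p <= q)%O -> (q <= r)%O ->
    dmap q r (dmap p q v) = dmap p r v
}.
Arguments diagram {d}.
Arguments dK {d P}.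
Arguments dmap {d P}.
Set Implicit Arguments.

Definition hidx d (P : finPOrderType d) (K : diagram P) : finType :=
  (P + {q : P & vtx (dK K q)})%type.

(** The (Bousfield–Kan) homotopy colimit of K restricted to S ⊆ P:
    the quotient of  ⊔_{chains p0 < ... < pk in S} Δ^k × |K(p0)|  by the
    face identifications, realised concretely (and homeomorphically) as the
    set of points  z = (t_q , t_q · K(p0 -> q)_*(x))_q ,  where t is a point of
    the simplex spanned by a chain of S lying above p0 ∈ S and x ∈ |K(p0)|. *)
Definition hocolim_on (R : realType) d (P : finPOrderType d) (K : diagram P)
    (S : {set P}) : set {ptws hidx K -> R} :=
  [set z | exists (p0 : P) (t : P -> R) (x : vtx (dK K p0) -> R),
     [/\ p0 \in S /\ realization R (dK K p0) x,
         (forall q, 0 <= t q) /\ \sum_q t q = 1,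
         (forall q, t q != 0 -> q \in S /\ (p0 <= q)%O),
         (forall q r, t q != 0 -> t r != 0 -> (q <= r)%O || (r <= q)%O) &
         z = fun i => match i with
                      | inl q => t q
                      | inr (existT q v) => t q * push (dmap K p0 q) x v
                      end]].

Definition order_complex_up (R : realType) d (P : finPOrderType d) (p : P)
    : set {ptws P -> R} :=
  [set a | [/\ forall q, 0 <= a q, \sum_q a q = 1,
              (forall q, a q != 0 -> (p < q)%O) &
              (forall q r, a q != 0 -> a r != 0 -> (q <= r)%O || (r <= q)%O)]].

Arguments order_complex_up R {d P} p.
Arguments hocolim_on R {d P} K S.

Definition homotopically_trivial_up (R : realType) d (P : finPOrderType d) (p : P) :=
  contractible R (order_complex_up R p).

Arguments homotopically_trivial_up R {d P} p.

From HB Require Import structures.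
From mathcomp Require Import all_boot all_order all_algebra.
From mathcomp Require Import all_classical all_reals.
From mathcomp Require Import topology function_spaces num_topology.
From mathcomp Require Import normedtype.
From mathcomp Require Import ring lra.
Import numFieldTopology.Exports numFieldNormedType.Exports.
Set Implicit Arguments. Unset Strict Implicit. Unset Printing Implicit Defensive.
Import Order.TTheory GRing.Theory Num.Theory.
Local Open Scope classical_set_scope.
Local Open Scope ring_scope.

(* Let [H] contract the order complex of F̂_p to a point [c], with [H (0, -) = c] and
   [H (1, -) = id]. A point of the homotopy colimit is a weight [t] on a chain of [P] with
   barycentric coordinates pushed along the chain. At time [s], [deform] moves the fraction
   [moved s = max(0, 2s - 1)] of the weight of [p] onto F̂_p, spread according to
   [H (λ, u)]: [u] is the normalised weight already above [p], and [λ] is 1 when [p] has no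
   weight but drops to 0 once the weight above [p] is small compared with that of [p] and
   [s > 1/2]. Weight is thus moved only where [H (λ, u) = c] or where [u] is continuous;
   points off [p] never move, and [deform 1] retracts onto the colimit over P∖{p}. *)

Section Push.
Variables (R : realType) (V W : finType).
Implicit Types (g : V -> W) (x : V -> R).

Lemma push_ge0 g x : (forall v, 0 <= x v) -> forall w, 0 <= push g x w.
Proof. by move=> x0 w; apply: sumr_ge0. Qed.

Lemma push_sum g x : \sum_w push g x w = \sum_v x v.
Proof. by rewrite /push [RHS](partition_big g predT). Qed.

Lemma push_le1 g x w :
  (forall v, 0 <= x v) -> \sum_v x v = 1 -> push g x w <= 1.
Proof.
move=> x0 x1; rewrite -x1 /push [X in _ <= X](bigID (fun v => g v == w)) /=.
by rewrite lerDl sumr_ge0.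
Qed.

Lemma push_neq0 g x w : push g x w != 0 -> exists2 v, g v = w & x v != 0.
Proof.
move=> H; apply: contrapT => hn; move/eqP: H; apply; rewrite /push big1 //.
move=> v /eqP gv; case: (eqVneq (x v) 0) => // xv.
by exfalso; apply: hn; exists v.
Qed.

Lemma push_image_neq0 g x v :
  (forall v, 0 <= x v) -> x v != 0 -> push g x (g v) != 0.
Proof.
move=> x0 xv; rewrite /push (bigD1 v) //= gt_eqF //.
by apply: ltr_pwDl; [rewrite lt_def xv x0 | apply: sumr_ge0].
Qed.

Lemma push_comp (U : finType) (f : U -> V) g (x : U -> R) w :
  push g (push f x) w = push (g \o f) x w.
Proof.
rewrite /push [RHS](partition_big f (fun v => g v == w)) //=.
apply: eq_bigr => v /eqP gv; apply: eq_bigl => u.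
by case: (f u =P v) => [->|]; rewrite ?gv ?andbF ?eqxx.
Qed.

End Push.

Lemma exists_neq0_sumr1 (R : realType) (I : finType) (t : I -> R) :
  \sum_i t i = 1 -> exists i, t i != 0.
Proof.
move=> t1; apply: contrapT => hn; move: t1; rewrite big1 => [/eqP|i _].
  by rewrite eq_sym oner_eq0.
by case: (eqVneq (t i) 0) => // ti; exfalso; apply: hn; exists i.
Qed.

Lemma chain_support_min (R : realType) d (P : finPOrderType d) (t : P -> R) :
  (forall q r, t q != 0 -> t r != 0 -> (q <= r)%O || (r <= q)%O) ->
  \sum_q t q = 1 -> exists2 m, t m != 0 & forall q, t q != 0 -> (m <= q)%O.
Proof.
move=> ch /exists_neq0_sumr1 [q0 tq0].
pose below m := #|[set r | (t r != 0) && (r < m)%O]%SET|.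
case: (@arg_minnP _ q0 (fun i => t i != 0) below tq0) => m tm hmin.
exists m => // q tq; have /orP [//|qm] := ch _ _ tm tq.
case: (eqVneq q m) => [->//|qnm]; have qltm : (q < m)%O by rewrite lt_neqAle qnm.
exfalso; move: (hmin q tq); rewrite leqNgt => /negP; apply; apply: proper_card.
apply/properP; split; last by exists q; rewrite !inE ?tq ?qltm ?ltxx.
apply/fintype.subsetP => r; rewrite !inE => /andP [-> rq] /=.
exact: lt_trans rq qltm.
Qed.

Section HocolimRepresentation.
Variables (R : realType) (d : Order.disp_t) (P : finPOrderType d) (K : diagram P).
Local Notation T := {ptws hidx K -> R}.

Lemma realization_push (p q : P) (x : vtx (dK K p) -> R) : (p <= q)%O ->
  realization R (dK K p) x -> realization R (dK K q) (push (dmap K p q) x).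
Proof.
move=> pq [x0 x1 xf]; split; [exact: push_ge0 | by rewrite push_sum |].
have -> : [set w | push (dmap K p q) x w != 0]%SET =
          [set dmap K p q v | v in [set v | x v != 0]%SET]%SET.
  apply/setP => w; rewrite !inE; apply/idP/imsetP.
    by move=> /push_neq0 [v <- xv]; exists v; rewrite ?inE.
  by move=> [v]; rewrite inE => xv ->; apply: push_image_neq0.
exact: dmap_simplicial.
Qed.

Lemma push_dmap_comp (p0 m q : P) (x : vtx (dK K p0) -> R) v :
  (p0 <= m)%O -> (m <= q)%O ->
  push (dmap K m q) (push (dmap K p0 m) x) v = push (dmap K p0 q) x v.
Proof.
move=> p0m mq; rewrite push_comp /push; apply: eq_bigl => u /=.
by rewrite dmap_comp.
Qed.

(* A representation of [z] over any base [p0] below the support of [t]; unlike in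
   [hocolim_on], [p0] need not lie in [S]. *)
Definition hocolim_rep (S : {set P}) (z : T) p0 (x : vtx (dK K p0) -> R)
    (t : P -> R) :=
  [/\ realization R (dK K p0) x,
      (forall q, 0 <= t q) /\ \sum_q t q = 1,
      (forall q, t q != 0 -> q \in S /\ (p0 <= q)%O),
      (forall q r, t q != 0 -> t r != 0 -> (q <= r)%O || (r <= q)%O) &
      (forall q, z (inl q) = t q) /\
      (forall q v, z (inr (existT _ q v)) = t q * push (dmap K p0 q) x v)].

Lemma hocolim_onP (S : {set P}) (z : T) :
  hocolim_on R K S z <-> exists p0 x t, @hocolim_rep S z p0 x t.
Proof.
split=> [[p0 [t [x [[_ xr] t01 tS ch ->]]]]|[p0 [x [t [xr [t0 t1] tS ch [zl zr]]]]]].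
  by exists p0, x, t.
have [m tm mmin] := chain_support_min ch t1; have [mS p0m] := tS _ tm.
exists m, t, (push (dmap K p0 m) x); split => //.
- by split => //; apply: realization_push.
- by move=> q tq; split; [exact: (tS _ tq).1 | exact: mmin].
apply/funext => -[q|[q v]] //=; rewrite zr.
case: (eqVneq (t q) 0) => [->|tq]; first by rewrite !mul0r.
by rewrite push_dmap_comp // mmin.
Qed.

End HocolimRepresentation.

Section Clamp.
Variable R : realType.

Definition clamp01 (y : R) := Num.min 1 (Num.max 0 y).
Definition moved (s : R) := Num.max 0 (2 * s - 1).

Lemma clamp01_in01 y : unit_interval R (clamp01 y).
Proof.
rewrite /unit_interval /= /clamp01; apply/andP; split.
  by rewrite le_min ler01 le_max lexx.
by rewrite ge_min lexx.
Qed.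

Lemma clamp01_1 : clamp01 1 = 1.
Proof. by rewrite /clamp01 (max_idPr ler01) (min_idPr (lexx _)). Qed.

Lemma clamp01_lt0 y : y < 0 -> clamp01 y = 0.
Proof. by move=> y0; rewrite /clamp01 (max_idPl (ltW y0)) (min_idPr ler01). Qed.

Lemma clamp01_continuous : continuous clamp01.
Proof.
move=> y; apply: continuous_min; first exact: cvg_cst.
by apply: continuous_max; [exact: cvg_cst | exact: cvg_id].
Qed.

Lemma moved_ge0 s : 0 <= moved s.
Proof. by rewrite /moved le_max lexx. Qed.

Lemma moved_le1 s : s <= 1 -> moved s <= 1.
Proof. by move=> s1; rewrite /moved ge_max ler01 /=; lra. Qed.

Lemma moved0 : moved 0 = 0.
Proof. by rewrite /moved mulr0 sub0r (max_idPl (lerN10 _)). Qed.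

Lemma moved1 : moved 1 = 1.
Proof. by rewrite /moved mulr1 (_ : 2 - 1 = 1 :> R) ?(max_idPr ler01) //; lra. Qed.

Lemma moved_neq0 s : moved s != 0 -> 1 < 2 * s.
Proof. by rewrite /moved; case: (leP (2 * s - 1) 0) => h; rewrite ?eqxx // -subr_gt0. Qed.

Lemma moved_continuous : continuous (moved : R -> R).
Proof.
move=> s; apply: (@continuous_max R R (fun=> 0) (fun s => 2 * s - 1) s).
  exact: cvg_cst.
by apply: cvgB; [apply: cvgM; [exact: cvg_cst | exact: cvg_id] | exact: cvg_cst].
Qed.

End Clamp.

Section Convergence.
Variables (W : Type) (Fl : set_system W).
Context {FlF : Filter Fl}.

Lemma cvg_eventually_eq (U : topologicalType) (f g : W -> U) (l : U) :
  (\forall w \near Fl, f w = g w) -> g @ Fl --> l -> f @ Fl --> l.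
Proof. by move=> e; apply: cvg_trans; apply: near_eq_cvg; apply: filterS e. Qed.

Lemma cvg_to_within (U : topologicalType) (g : W -> U) (D : set U) (u : U) :
  g @ Fl --> u -> (\forall w \near Fl, D (g w)) -> g @ Fl --> within D (nbhs u).
Proof. by move=> gu gD A /gu; apply: filterS2 gD => w Dw; apply. Qed.

Variable R : realType.

Lemma cvg_sumr (I : finType) (Pr : pred I) (f : I -> W -> R) (a : I -> R) :
  (forall i, Pr i -> f i @ Fl --> a i) ->
  (fun w => \sum_(i | Pr i) f i w) @ Fl --> \sum_(i | Pr i) a i.
Proof. by move=> fa; apply: cvg_big => // -[x y]; exact: (cvgD cvg_fst cvg_snd). Qed.

Lemma cvg_mul_unit_bounded (f g : W -> R) (a b : R) :
  f @ Fl --> a -> (\forall w \near Fl, 0 <= f w /\ 0 <= g w <= 1) ->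
  (a != 0 -> g @ Fl --> b) -> (fun w => f w * g w) @ Fl --> a * b.
Proof.
move=> fa fg gb; case: (eqVneq a 0) => [a0|]; last by move/gb; apply: cvgM.
rewrite a0 mul0r; apply: (@squeeze_cvgr _ _ FlF R (fun=> 0) f); last 2 first.
- exact: cvg_cst.
- by rewrite -a0.
apply: filterS fg => w [f0 /andP [g0 g1]].
by rewrite mulr_ge0 //= ler_piMr.
Qed.

Lemma cvg_ptws (I : eqType) (Zf : W -> {ptws I -> R}) (z0 : {ptws I -> R}) :
  Zf @ Fl --> z0 <-> forall i, (fun w => Zf w i) @ Fl --> z0 i.
Proof.
split=> [Zz i|Zz].
  exact: (cvg_comp _ _ Zz (@proj_continuous I (fun=> R) i z0)).
apply/cvg_sup => i A; rewrite nbhsE => -[B [[U Uo UB] Bz] BA].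
have /(Zz i) : nbhs (z0 i) U by apply: open_nbhs_nbhs; split => //; rewrite -UB in Bz.
by rewrite nbhs_filterE /=; apply: filterS => y Uy; apply: BA; rewrite -UB.
Qed.

End Convergence.

Section Deformation.
Variables (R : realType) (d : Order.disp_t) (P : finPOrderType d) (K : diagram P) (p : P).
Local Notation T := {ptws hidx K -> R}.
Local Notation A := (order_complex_up R p).
Variables (H : (R * {ptws P -> R})%type -> {ptws P -> R}) (c : {ptws P -> R}).
Hypotheses (HA : forall s a, unit_interval R s -> A a -> A (H (s, a)))
  (H1 : forall a, A a -> H (1, a) = a) (cA : A c).

Definition weight (z : T) q := z (inl q).
Definition upweight z := \sum_(q | (p < q)%O) weight z q.
Definition upmass s z := upweight z + weight z p * moved s.
Definition upshare s z := 1 - s * (weight z p / (weight z p + upweight z)).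
Definition updist z : {ptws P -> R} :=
  if upweight z == 0 then c
  else fun q => if (p < q)%O then weight z q / upweight z else 0.
Definition target s z := H (clamp01 (3 * upshare s z - 2), updist z).
Definition upcoord (z : T) q (v : vtx (dK K q)) :=
  if weight z p != 0 then
    push (dmap K p q) (fun w => z (inr (existT _ p w)) / weight z p) v
  else if weight z q != 0 then z (inr (existT _ q v)) / weight z q else 0.

Definition deform s z : T := fun i =>
  match i with
  | inl q =>
      if q == p then weight z p * (1 - moved s)
      else if (p < q)%O then upmass s z * target s z q
      else z (inl q)
  | inr (existT q v) =>
      if q == p then (1 - moved s) * z (inr (existT _ q v))
      else if (p < q)%O then upmass s z * target s z q * upcoord z v
      else z (inr (existT _ q v))
  end.

Lemma sum_split_at (f : P -> R) : \sum_q f q =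
  f p + \sum_(q | (p < q)%O) f q + \sum_(q | (q != p) && ~~ (p < q)%O) f q.
Proof.
rewrite (bigD1 p) //= -addrA; congr (_ + _).
rewrite (bigID (fun q => (p < q)%O)) /=; congr (_ + _).
by apply: eq_bigl => q; case: (eqVneq q p) => [->|]; rewrite ?ltxx ?andbT.
Qed.

Lemma order_complex_up_sum a : A a -> \sum_(q | (p < q)%O) a q = 1.
Proof.
move=> [a0 a1 aup _]; move: a1; rewrite sum_split_at.
have -> : a p = 0 by case: (eqVneq (a p) 0) => // /aup; rewrite ltxx.
rewrite add0r [X in _ + X]big1 ?addr0 // => q /andP [_ nq].
by case: (eqVneq (a q) 0) => // /aup; rewrite (negbTE nq).
Qed.

Lemma order_complex_up_le1 a q : A a -> a q <= 1.
Proof.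
move=> [a0 a1 _ _]; rewrite -a1 (bigD1 q) //= lerDl.
by apply: sumr_ge0 => r _.
Qed.

Lemma target_simplex s z : A (updist z) -> A (target s z).
Proof. by move=> uA; apply: HA => //; apply: clamp01_in01. Qed.

Lemma target_upshare1 s z : A (updist z) -> upshare s z = 1 -> target s z = updist z.
Proof.
move=> uA m1; rewrite /target m1.
have -> : 3 * 1 - 2 = 1 :> R by rewrite mulr1; apply/eqP; rewrite subr_eq.
by rewrite clamp01_1 H1.
Qed.

Lemma upshare_weight0 s z : weight z p = 0 -> upshare s z = 1.
Proof. by move=> b0; rewrite /upshare b0 mul0r mulr0 subr0. Qed.

Section Representation.
Variables (S : {set P}) (z : T) (p0 : P) (x : vtx (dK K p0) -> R) (t : P -> R).
Hypothesis zrep : hocolim_rep S z x t.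

Lemma weightE q : weight z q = t q.
Proof. by case: zrep => _ _ _ _ [zl _]; exact: zl. Qed.

Lemma upweight_ge0 : 0 <= upweight z.
Proof.
have [_ [t0 _] _ _ _] := zrep.
by apply: sumr_ge0 => q _; rewrite weightE.
Qed.

Lemma upweight_eq0 : upweight z = 0 -> forall q, (p < q)%O -> t q = 0.
Proof.
have [_ [t0 _] _ _ _] := zrep.
move=> /eqP; rewrite psumr_eq0 => [/allP up0 q pq|q _]; last by rewrite weightE.
by have /implyP/(_ pq)/eqP := up0 q (mem_index_enum _); rewrite weightE.
Qed.

Lemma updist_simplex : A (updist z).
Proof.
have [_ [t0 _] _ ch _] := zrep.
rewrite /updist; case: eqP => [//|/eqP g0].
have gp : 0 < upweight z by rewrite lt_def g0 upweight_ge0.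
split.
- by move=> q; case: ifP => // _; rewrite divr_ge0 ?weightE // ltW.
- rewrite sum_split_at ltxx add0r [X in _ + X]big1 ?addr0; last first.
    by move=> q /andP [_ /negbTE ->].
  rewrite (eq_bigr (fun q => weight z q / upweight z)); last by move=> q ->.
  by rewrite -mulr_suml divff.
- by move=> q; case: ifP => // _; rewrite eqxx.
- move=> q r; case: ifP => _; last by rewrite eqxx.
  case: ifP => _; last by rewrite eqxx.
  by rewrite !mulf_eq0 !invr_eq0 (negbTE g0) !orbF !weightE; exact: ch.
Qed.

Lemma upweight_updist q : (p < q)%O -> upweight z * updist z q = t q.
Proof.
move=> pq; rewrite /updist; case: eqP => [g0|/eqP g0].
  by rewrite g0 mul0r (upweight_eq0 g0).
by rewrite pq mulrC -mulrA mulVf // mulr1 weightE.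
Qed.

Lemma upcoord_push q v : (p < q)%O -> (weight z p != 0 \/ t q != 0) ->
  upcoord z v = push (dmap K p0 q) x v.
Proof.
have [_ _ tS _ [_ zr]] := zrep.
move=> pq h; rewrite /upcoord; case: ifP => [b0|/negbT]; last first.
  rewrite negbK => /eqP b0; case: h => [|tq]; first by rewrite b0 eqxx.
  by rewrite weightE tq zr mulrC mulKf.
have p0p : (p0 <= p)%O by have := tS p; rewrite -weightE => /(_ b0) [].
rewrite -(push_dmap_comp x v p0p (ltW pq)) /push; apply: eq_bigr => w _.
by rewrite zr /weight -/(weight z p) weightE mulrC mulKf // -weightE.
Qed.

Lemma upcoord_bounds q v : (p < q)%O -> 0 <= @upcoord z q v <= 1.
Proof.
have [[xr0 xr1 _] _ _ _ _] := zrep.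
move=> pq.
have h := push_ge0 (dmap K p0 q) xr0 v; have h' := push_le1 (dmap K p0 q) v xr0 xr1.
case: (eqVneq (weight z p) 0) => [b0|b0]; last by rewrite upcoord_push ?h ?h' //; left.
case: (eqVneq (t q) 0) => [tq|tq]; last by rewrite upcoord_push ?h ?h' //; right.
by rewrite /upcoord b0 eqxx /= weightE tq eqxx lexx ler01.
Qed.

Lemma deform_id s : (moved s = 0 \/ weight z p = 0) -> upshare s z = 1 -> deform s z = z.
Proof.
have [_ [t0 _] tS ch [zl zr]] := zrep.
move=> hm m1; have bm : weight z p * moved s = 0.
  by case: hm => ->; rewrite ?mulr0 ?mul0r.
have tuE := target_upshare1 updist_simplex m1.
apply/funext => -[q|[q v]] /=; rewrite /upmass bm addr0 tuE.
- case: eqP => [->|_].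
    by case: hm => [->|b0]; [rewrite subr0 mulr1 | rewrite b0 mul0r -b0].
  by case: ifP => // pq; rewrite upweight_updist // zl.
- case: eqP => [qp|_].
    subst q; case: hm => [->|b0]; first by rewrite subr0 mul1r.
    by rewrite zr -weightE b0 !mul0r mulr0.
  case: ifP => // pq; rewrite upweight_updist // zr.
  case: (eqVneq (t q) 0) => [->|tq]; first by rewrite !mul0r.
  by rewrite upcoord_push //; right.
Qed.

Lemma deform_support s q : deform s z (inl q) != 0 ->
  [\/ q = p /\ weight z p != 0,
      [/\ (p < q)%O, target s z q != 0 & (weight z p != 0 \/ t q != 0)] |
      [/\ q != p, ~~ (p < q)%O & t q != 0]].
Proof.
have [_ _ _ _ [zl _]] := zrep.
rewrite /=; case: (eqVneq q p) => [->|qp].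
  by rewrite mulf_eq0 negb_or => /andP [b _]; constructor 1.
case: ifP => pq; last by rewrite zl => tq; constructor 3; rewrite ?pq.
rewrite mulf_eq0 negb_or => /andP [w hq]; constructor 2; split => //.
case: (eqVneq (weight z p) 0) => [b0|]; [right|by left].
move: hq w; rewrite (target_upshare1 updist_simplex (upshare_weight0 s b0)) /updist /upmass.
case: (eqVneq (upweight z) 0) => [g|g] hq w.
  by move: w; rewrite g b0 mul0r addr0 eqxx.
by move: hq; rewrite pq mulf_eq0 negb_or weightE => /andP [].
Qed.

Lemma deform_weight_ge0 s q : 0 <= s <= 1 -> 0 <= deform s z (inl q).
Proof.
have [_ [t0 _] _ _ [zl _]] := zrep.
move=> /andP [s0 s1]; have m1 := moved_le1 s1.
have [a0 _ _ _] := target_simplex s updist_simplex.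
rewrite /=; case: eqP => _.
  by rewrite mulr_ge0 ?subr_ge0 // weightE.
case: ifP => _; last by rewrite zl.
by rewrite mulr_ge0 // addr_ge0 ?upweight_ge0 // mulr_ge0 ?moved_ge0 // weightE.
Qed.

Lemma deform_weight_sum s : \sum_q deform s z (inl q) = 1.
Proof.
have [_ [_ t1] _ _ [zl _]] := zrep.
rewrite sum_split_at /= eqxx.
have -> : \sum_(q | (p < q)%O) deform s z (inl q) = upmass s z.
  rewrite (eq_bigr (fun q => upmass s z * target s z q)); last first.
    by move=> q pq; rewrite /= (gt_eqF pq) pq.
  by rewrite -mulr_sumr (order_complex_up_sum (target_simplex s updist_simplex)) mulr1.
rewrite (eq_bigr t) => [|q /andP [qp pq]]; last by rewrite /= (negbTE qp) (negbTE pq).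
rewrite /upmass.
have -> : upweight z = \sum_(q | (p < q)%O) t q by apply: eq_bigr => q _; exact: weightE.
have := t1; rewrite sum_split_at weightE; lra.
Qed.

Lemma deform_weight_above s q : deform s z (inl q) != 0 -> (p0 <= q)%O.
Proof.
have [_ _ tS _ _] := zrep.
have p0p : weight z p != 0 -> (p0 <= p)%O by rewrite weightE => /tS [].
case/deform_support => [[-> /p0p //]|[pq _ [/p0p p0p'|/tS [] //]]|[_ _ /tS [] //]].
exact: le_trans p0p' (ltW pq).
Qed.

Lemma deform_weight_chain s q r :
  deform s z (inl q) != 0 -> deform s z (inl r) != 0 -> (q <= r)%O || (r <= q)%O.
Proof.
have [_ _ _ ch _] := zrep.
have [_ _ _ ach] := target_simplex s updist_simplex.
have tpE : t p = weight z p by rewrite weightE.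
have mix q' r' : (p < q')%O -> (weight z p != 0 \/ t q' != 0) ->
    r' != p -> ~~ (p < r')%O -> t r' != 0 -> (r' <= q')%O.
  move=> pq h rp pr tr; case: h => [bz|tq].
    have tp : t p != 0 by rewrite tpE.
    have /orP [pr'|rp'] := ch p r' tp tr; last exact: le_trans rp' (ltW pq).
    by move: pr; rewrite lt_neqAle pr' andbT eq_sym rp.
  have /orP [qr|//] := ch _ _ tq tr.
  by move: pr; rewrite (lt_le_trans pq qr).
move=> /deform_support hq /deform_support hr.
case: hq => [[-> bz]|[pq hq h]|[qp pq tq]];
case: hr => [[-> bz']|[pr hr h']|[rp pr tr]].
- by rewrite lexx.
- by rewrite (ltW pr).
- by apply: ch; rewrite ?tpE.
- by rewrite (ltW pq) orbT.
- exact: ach.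
- by rewrite (mix q r) ?orbT.
- by apply: ch; rewrite ?tpE.
- by rewrite (mix r q).
- exact: ch.
Qed.

Lemma deform_vertex s q v : deform s z (inr (existT _ q v)) =
  deform s z (inl q) * push (dmap K p0 q) x v.
Proof.
have [_ _ _ _ [zl zr]] := zrep.
rewrite /=; case: eqP => [qp|/eqP qp]; first by subst q; rewrite zr weightE; ring.
case: ifP => pq; last by rewrite zr zl.
have [->|w] := eqVneq (upmass s z * target s z q) 0; first by rewrite !mul0r.
have /deform_support : deform s z (inl q) != 0 by rewrite /= (negbTE qp) pq.
case=> [[qp' _]|[_ _ h]|[_ pq' _]]; first by rewrite qp' eqxx in qp.
  by rewrite upcoord_push.
by rewrite pq in pq'.
Qed.

Lemma deform_in_hocolim s (S' : {set P}) : 0 <= s <= 1 ->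
  (forall q, q != p -> q \in S') -> (moved s < 1 -> p \in S') ->
  hocolim_on R K S' (deform s z).
Proof.
have [xr _ _ _ _] := zrep.
move=> s01 Sq Sp; apply/hocolim_onP; exists p0, x, (fun q => deform s z (inl q)).
split=> //.
- by split=> [q|]; [exact: deform_weight_ge0 | exact: deform_weight_sum].
- move=> q dq; split; last exact: deform_weight_above dq.
  case: (eqVneq q p) => [qp|/Sq //]; subst q; apply: Sp.
  move: dq; rewrite /= eqxx lt_neqAle moved_le1 ?andbT; last by case/andP: s01.
  by apply: contraNN => /eqP ->; rewrite subrr mulr0.
- exact: deform_weight_chain.
- by split=> // q v; exact: deform_vertex.
Qed.

End Representation.

Hypotheses (H0 : forall a, A a -> H (0, a) = c)
  (Hc : {within unit_interval R `*` A, continuous H}).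

Local Notation X := (hocolim_on R K [set: P]).
Local Notation Y := (hocolim_on R K [set~ p]).

Lemma hocolim_updist z : X z -> A (updist z).
Proof. by case/hocolim_onP => p0 [x [t zrep]]; exact: updist_simplex zrep. Qed.

Lemma hocolim_weight_ge0 z q : X z -> 0 <= weight z q.
Proof.
case/hocolim_onP => p0 [x [t zrep]]; have [_ [t0 _] _ _ _] := zrep.
by rewrite (weightE zrep).
Qed.

Lemma hocolim_upmass_ge0 s z : X z -> 0 <= upmass s z.
Proof.
move=> Xz; rewrite addr_ge0 ?mulr_ge0 ?moved_ge0 ?hocolim_weight_ge0 //.
by apply: sumr_ge0 => q _; exact: hocolim_weight_ge0.
Qed.

Lemma hocolim_target_bounds s z q : X z -> 0 <= target s z q <= 1.
Proof.
move=> /hocolim_updist/(target_simplex s) tA; have [t0 _ _ _] := tA.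
by rewrite t0 order_complex_up_le1.
Qed.

Lemma hocolim_upcoord_bounds z q v : X z -> (p < q)%O -> 0 <= @upcoord z q v <= 1.
Proof. by case/hocolim_onP => p0 [x [t zrep]] pq; exact: (upcoord_bounds zrep v pq). Qed.

Lemma hocolim_upcoordE z q v : X z -> (p < q)%O -> weight z q != 0 ->
  @upcoord z q v = z (inr (existT _ q v)) / weight z q.
Proof.
case/hocolim_onP => p0 [x [t zrep]] pq zq; have [_ _ _ _ [_ zr]] := zrep.
rewrite (upcoord_push zrep) //; last by right; rewrite -(weightE zrep).
by rewrite zr -(weightE zrep) mulrAC mulfV ?mul1r.
Qed.

Lemma target_center s z : X z -> 3 * upshare s z - 2 < 0 -> target s z = c.
Proof. by move=> Xz neg; rewrite /target clamp01_lt0 // H0 //; exact: hocolim_updist. Qed.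

Lemma upmass_target_neq0 s z q : X z -> (p < q)%O ->
  upmass s z * target s z q != 0 -> weight z p != 0 \/ weight z q != 0.
Proof.
case/hocolim_onP => p0 [x [t zrep]] pq mt.
case: (eqVneq (weight z p) 0) => [b0|]; [right|by left].
move: mt; rewrite /upmass b0 mul0r addr0.
rewrite (target_upshare1 (updist_simplex zrep) (upshare_weight0 s b0)).
by rewrite (upweight_updist zrep) // (weightE zrep).
Qed.

Section Continuity.
Variables (W : Type) (Fl : set_system W).
Context {FlF : Filter Fl}.
Variables (Sf : W -> R) (Zf : W -> T) (s0 : R) (z0 : T).
Hypotheses (Sf_cvg : Sf @ Fl --> s0) (Zf_cvg : Zf @ Fl --> z0)
  (XZf : \forall w \near Fl, X (Zf w)) (Xz0 : X z0).

Lemma coord_cvg i : (fun w => Zf w i) @ Fl --> z0 i.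
Proof. exact: (cvg_ptws _ _).1 Zf_cvg i. Qed.

Lemma weight_cvg q : (fun w => weight (Zf w) q) @ Fl --> weight z0 q.
Proof. exact: coord_cvg. Qed.

Lemma upweight_cvg : (fun w => upweight (Zf w)) @ Fl --> upweight z0.
Proof. by apply: cvg_sumr => q _; exact: coord_cvg. Qed.

Lemma upmass_cvg : (fun w => upmass (Sf w) (Zf w)) @ Fl --> upmass s0 z0.
Proof.
apply: cvgD; first exact: upweight_cvg.
by apply: cvgM; [exact: coord_cvg | exact: (cvg_comp _ _ Sf_cvg (@moved_continuous R s0))].
Qed.

Lemma upshare_cvg : weight z0 p + upweight z0 != 0 ->
  (fun w => upshare (Sf w) (Zf w)) @ Fl --> upshare s0 z0.
Proof.
move=> sum0; apply: cvgB; first exact: cvg_cst.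
apply: cvgM => //; apply: cvgM; first exact: coord_cvg.
by apply: cvgV => //; apply: cvgD; [exact: coord_cvg | exact: upweight_cvg].
Qed.

Lemma updist_cvg : upweight z0 != 0 ->
  (fun w => updist (Zf w)) @ Fl --> updist z0.
Proof.
move=> g0; have g_near := @cvgr_neq0 _ R^o _ _ FlF _ _ upweight_cvg g0.
apply/cvg_ptws => r; rewrite {2}/updist (negbTE g0).
apply: (cvg_eventually_eq
  (g := fun w => if (p < r)%O then weight (Zf w) r / upweight (Zf w) else 0)).
  by apply: filterS g_near => w gw; rewrite /updist (negbTE gw).
case: (p < r)%O; last exact: cvg_cst.
by apply: cvgM; [exact: coord_cvg | apply: cvgV => //; exact: upweight_cvg].
Qed.

(* Where [updist] jumps ([upweight z0 = 0]) weight is being moved, so [s0 > 1/2] and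
   [target] is locally the constant [c]. *)
Lemma target_cvg : upmass s0 z0 != 0 ->
  (fun w => target (Sf w) (Zf w)) @ Fl --> target s0 z0.
Proof.
move=> m0; have b00 := hocolim_weight_ge0 p Xz0.
have g00 : 0 <= upweight z0 by apply: sumr_ge0 => q _; exact: hocolim_weight_ge0.
have sum0 : weight z0 p + upweight z0 != 0.
  apply: contraNneq m0 => h; rewrite /upmass.
  have [-> ->] : weight z0 p = 0 /\ upweight z0 = 0 by split; lra.
  by rewrite mul0r addr0.
have cv3 : (fun w => 3 * upshare (Sf w) (Zf w) - 2) @ Fl --> 3 * upshare s0 z0 - 2.
  by apply: cvgB; [apply: cvgM; [exact: cvg_cst | exact: upshare_cvg] | exact: cvg_cst].
case: (eqVneq (upweight z0) 0) => [g0|g0].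
  have b0 : weight z0 p != 0.
    by apply: contraNneq m0; rewrite /upmass g0 => ->; rewrite mul0r addr0.
  have /moved_neq0 s0h : moved s0 != 0.
    by apply: contraNneq m0; rewrite /upmass g0 => ->; rewrite mulr0 addr0.
  have neg0 : 3 * upshare s0 z0 - 2 < 0 by rewrite /upshare g0 addr0 mulfV // mulr1; lra.
  rewrite (target_center Xz0 neg0); apply: cvg_near_cst.
  have neg_near := @cvgr_lt R W Fl FlF _ _ cv3 0 neg0.
  by apply: filterS2 XZf neg_near => w Xw neg; exact: target_center.
have time_cvg : (fun w => clamp01 (3 * upshare (Sf w) (Zf w) - 2)) @ Fl -->
    clamp01 (3 * upshare s0 z0 - 2).
  exact: (cvg_comp _ _ cv3 (@clamp01_continuous R _)).
have in_dom s z : X z -> (unit_interval R `*` A) (clamp01 (3 * upshare s z - 2), updist z).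
  by move=> Xw; split; [exact: clamp01_in01 | exact: hocolim_updist].
have H_cont := (@subspace_continuousP _ (unit_interval R `*` A) _ H).1 Hc _ (in_dom s0 z0 Xz0).
have pair_cvg : (fun w => (clamp01 (3 * upshare (Sf w) (Zf w) - 2), updist (Zf w))) @ Fl -->
    ((clamp01 (3 * upshare s0 z0 - 2), updist z0) : (R * {ptws P -> R})%type).
  exact: cvg_pair time_cvg (updist_cvg g0).
exact: (cvg_comp _ _
  (cvg_to_within pair_cvg (filterS (fun w => in_dom (Sf w) (Zf w)) XZf)) H_cont).
Qed.

Lemma upcoord_cvg q (v : vtx (dK K q)) : (p < q)%O ->
  weight z0 p != 0 \/ weight z0 q != 0 ->
  (fun w => upcoord (Zf w) v) @ Fl --> upcoord z0 v.
Proof.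
move=> pq h; case: (eqVneq (weight z0 p) 0) => [b0|b0].
  have t0 : weight z0 q != 0 by case: h => //; rewrite b0 eqxx.
  rewrite (hocolim_upcoordE v Xz0 pq t0).
  apply: (cvg_eventually_eq (g := fun w => Zf w (inr (existT _ q v)) / weight (Zf w) q)).
    have t_near := @cvgr_neq0 _ R^o _ _ FlF _ _ (weight_cvg (q := q)) t0.
    by apply: filterS2 XZf t_near => w Xw tw; exact: hocolim_upcoordE.
  by apply: cvgM; [exact: coord_cvg | apply: cvgV => //; exact: coord_cvg].
rewrite /upcoord b0.
apply: (cvg_eventually_eq (g := fun w => push (dmap K p q)
   (fun u => Zf w (inr (existT _ p u)) / weight (Zf w) p) v)).
  have b_near := @cvgr_neq0 _ R^o _ _ FlF _ _ (weight_cvg (q := p)) b0.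
  by apply: filterS b_near => w ->.
apply: cvg_sumr => u _.
by apply: cvgM; [exact: coord_cvg | apply: cvgV => //; exact: coord_cvg].
Qed.

Lemma deform_cvg : (fun w => deform (Sf w) (Zf w)) @ Fl --> deform s0 z0.
Proof.
have moved_cvg := cvg_comp _ _ Sf_cvg (@moved_continuous R s0).
have target_coord_cvg q : upmass s0 z0 != 0 ->
    (fun w => target (Sf w) (Zf w) q) @ Fl --> target s0 z0 q.
  by move=> m0; exact: (cvg_ptws _ _).1 (target_cvg m0) q.
have up_cvg q : (fun w => upmass (Sf w) (Zf w) * target (Sf w) (Zf w) q) @ Fl -->
    upmass s0 z0 * target s0 z0 q.
  apply: cvg_mul_unit_bounded upmass_cvg _ (target_coord_cvg q).
  apply: filterS XZf => w Xw.
  by split; [exact: hocolim_upmass_ge0 | exact: hocolim_target_bounds].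
apply/cvg_ptws => -[q|[q v]] /=.
- case: eqP => [qp|_].
    by subst q; apply: cvgM; [exact: weight_cvg | apply: cvgB => //; exact: cvg_cst].
  by case: ifP => pq; [exact: up_cvg | exact: weight_cvg].
- case: eqP => [_|_].
    by apply: cvgM; [apply: cvgB => //; exact: cvg_cst | exact: coord_cvg].
  case: ifP => pq; last exact: coord_cvg.
  apply: cvg_mul_unit_bounded (up_cvg q) _ _.
    apply: filterS XZf => w Xw; split; last exact: hocolim_upcoord_bounds.
    by rewrite mulr_ge0 ?hocolim_upmass_ge0 //; case/andP: (hocolim_target_bounds (Sf w) q Xw).
  by move/(upmass_target_neq0 Xz0 pq); exact: upcoord_cvg.
Qed.

End Continuity.

Lemma hocolim_sub z : Y z -> X z.
Proof.
case/hocolim_onP => p0 [x [t [xr t01 tS ch zrep]]]; apply/hocolim_onP.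
by exists p0, x, t; split=> // q /tS [_ p0q]; rewrite finset.in_setT.
Qed.

Lemma deform_hocolim s z : 0 <= s <= 1 -> X z -> X (deform s z).
Proof.
move=> s01 /hocolim_onP [p0 [x [t zrep]]].
by apply: (deform_in_hocolim zrep s01) => *; rewrite finset.in_setT.
Qed.

Lemma deform1_hocolim z : X z -> Y (deform 1 z).
Proof.
case/hocolim_onP => p0 [x [t zrep]]; apply: (deform_in_hocolim zrep).
- by rewrite ler01 lexx.
- by move=> q qp; rewrite !inE.
- by rewrite moved1 ltxx.
Qed.

Lemma deform0 z : X z -> deform 0 z = z.
Proof.
case/hocolim_onP => p0 [x [t zrep]]; apply: (deform_id zrep).
  by left; rewrite moved0.
by rewrite /upshare mul0r subr0.
Qed.

Lemma deform1_fixed z : Y z -> deform 1 z = z.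
Proof.
case/hocolim_onP => p0 [x [t zrep]]; have [_ _ tS _ _] := zrep.
have b0 : weight z p = 0.
  rewrite (weightE zrep); case: (eqVneq (t p) 0) => // /tS [].
  by rewrite !inE eqxx.
by apply: (deform_id zrep); [right | exact: upshare_weight0].
Qed.

Lemma hocolim_deformation_retract : homotopy_equiv R X Y.
Proof.
exists (deform 1), id; split.
- split; last exact: deform1_hocolim.
  apply/subspace_continuousP => z0 Xz0.
  apply: (@deform_cvg T (within X (nbhs z0)) _ (fun=> 1) id 1 z0) => //.
  + exact: cvg_cst.
  + exact: cvg_within.
  + exact: withinT.
- split; last exact: hocolim_sub.
  by apply: continuous_subspaceT => x; exact: cvg_id.
- exists (fun w => deform (1 - w.1) w.2); split; [|split].
  + apply/subspace_continuousP => -[s0 z0] [_ Xz0].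
    apply: (@deform_cvg _ (within (unit_interval R `*` X) (nbhs (s0, z0))) _
       (fun w => 1 - w.1) snd (1 - s0) z0) => //.
    * apply: cvgB; first exact: cvg_cst.
      by apply: cvg_within_filter; exact: cvg_fst.
    * by apply: cvg_within_filter; exact: cvg_snd.
    * by apply: filterS (withinT _ _) => -[s z] [].
  + move=> s z /andP [s0 s1] Xz; apply: deform_hocolim => //.
    by rewrite /=; apply/andP; split; lra.
  + by move=> z Xz; rewrite /= subr0 subrr deform0.
- exists snd; split; [|split].
  + by apply: continuous_subspaceT => x; exact: cvg_snd.
  + by [].
  + by move=> z Yz; rewrite /= deform1_fixed.
Qed.

End Deformation.

Theorem proposition3p6 (R : realType) (d : Order.disp_t) (P : finPOrderType d)
    (K : diagram P) (p : P) :
  homotopically_trivial_up R p ->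
  homotopy_equiv R (hocolim_on R K [set: P]) (hocolim_on R K [set~ p]).
Proof.
move=> [x0 [Ax0 [f [g [[_ fA] [_ gA] [H [Hc [HA Hend]]] _]]]]].
have H0 a : order_complex_up R p a -> H (0%R, a) = g x0.
  by move=> Aa; rewrite (Hend a Aa).1 /= (fA a Aa).
have H1 a : order_complex_up R p a -> H (1%R, a) = a.
  by move=> Aa; rewrite (Hend a Aa).2.
exact: (hocolim_deformation_retract K HA H1 (gA _ erefl) H0 Hc).
Qed.
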